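(* Let $\mathcal{R}$ be a ring and $(\mathcal{C}^{\bullet},\partial)$ a cochain complex of $\mathcal{R}$-modules with a compatible bigrading $\mathcal{C}^{k}=\bigoplus_{p+q=k}\mathcal{C}^{p,q}$, $\mathcal{C}^{p,q}=\{0\}$ whenever $p<0$ or $q<0$, and $\partial=\partial_{2,-1}+\partial_{1,0}+\partial_{0,1}$ with $\partial_{i,j}(\mathcal{C}^{p,q})\subseteq\mathcal{C}^{p+i,q+j}$. Let $\mathcal{N}:=\ker(\partial_{0,1})\cap\ker(\partial_{2,-1})\subseteq\mathcal{C}$, $\mathcal{N}^{p,q}:=\mathcal{N}\cap\mathcal{C}^{p,q}$ and, for $q\in\mathbb{Z}$, $\mathcal{N}_{q}:=\bigoplus_{p\in\mathbb{Z}}\mathcal{N}^{p-q,q}$ (graded so that $\mathcal{N}^{p-q,q}$ sits in degree $p$). Then the graded $\mathcal{R}$-module $\mathcal{N}$ is a cochain subcomplex of $(\mathcal{C},\partial)$, and for each $q\in\mathbb{Z}$, $\mathcal{N}_{q}$ is also a cochain subcomplex of $(\mathcal{C},\partial)$. *)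

From mathcomp Require Import all_boot all_order all_algebra.
Set Implicit Arguments. Unset Strict Implicit. Unset Printing Implicit Defensive.
Import Order.TTheory GRing.Theory Num.Theory.
Local Open Scope ring_scope.

(* The whole cochain complex C = (+)_k C^k = (+)_{p,q} C^{p,q} is modelled
   as one R-module V; the bigraded pieces C^{p,q} are given as subsets
   [C p q] of V (indices in int). *)

Section BiComplex.
Variables (R : pzRingType) (V : lmodType R).

Definition submodP (S : V -> Prop) : Prop :=
  S 0 /\ (forall x y, S x -> S y -> S (x + y)) /\ (forall (a : R) x, S x -> S (a *: x)).

Definition totd (d21 d10 d01 : {linear V -> V}) (x : V) : V :=
  d21 x + d10 x + d01 x.

Definition bigraded_complex (C : int -> int -> V -> Prop)
  (d21 d10 d01 : {linear V -> V}) : Prop :=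
  [/\ (forall p q, submodP (C p q)),
      (forall p q, (p < 0 \/ q < 0) -> forall x, C p q x -> x = 0),
      (forall x : V, exists (s : seq (int * int)) (f : int * int -> V),
          (forall i, C i.1 i.2 (f i)) /\ x = \sum_(i <- s) f i),
      (forall (s : seq (int * int)) (f : int * int -> V), uniq s ->
          (forall i, C i.1 i.2 (f i)) -> \sum_(i <- s) f i = 0 ->
          forall i, i \in s -> f i = 0) &
      [/\ (forall p q x, C p q x -> C (p + 2) (q - 1) (d21 x)),
          (forall p q x, C p q x -> C (p + 1) q (d10 x)),
          (forall p q x, C p q x -> C p (q + 1) (d01 x)) &
          (forall x, totd d21 d10 d01 (totd d21 d10 d01 x) = 0)]].

Definition Ctot (C : int -> int -> V -> Prop) (k : int) (x : V) : Prop :=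
  exists (s : seq int) (f : int -> V),
    (forall p, C p (k - p) (f p)) /\ x = \sum_(p <- s) f p.

Definition Nset (d21 d01 : {linear V -> V}) (x : V) : Prop :=
  d01 x = 0 /\ d21 x = 0.

Definition Npq (C : int -> int -> V -> Prop) (d21 d01 : {linear V -> V})
  (p q : int) (x : V) : Prop := Nset d21 d01 x /\ C p q x.

Definition subcomplex (C : int -> int -> V -> Prop)
  (d21 d10 d01 : {linear V -> V}) (S : int -> V -> Prop) : Prop :=
  (forall k, submodP (S k)) /\
  (forall k x, S k x -> Ctot C k x) /\
  (forall k x, S k x -> S (k + 1) (totd d21 d10 d01 x)).

End BiComplex.

From mathcomp Require Import all_boot all_order all_algebra.
From mathcomp Require Import zify.
Set Implicit Arguments. Unset Strict Implicit. Unset Printing Implicit Defensive.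
Import Order.TTheory GRing.Theory Num.Theory.
Local Open Scope ring_scope.

(* On N the total differential reduces to d10, since d01 and d21 vanish there.
   For x in N bihomogeneous of bidegree (p, q), expanding d (d x) = 0 gives
   d21 (d10 x) + d10 (d10 x) + d01 (d10 x) = 0, three terms of pairwise
   distinct bidegrees, so each vanishes and d10 x lies in N again. Since d01
   and d21 shift the bidegree by a fixed amount, the bihomogeneous components
   of an element of N also lie in N; grouping them by total degree shows
   that N is graded, and d10 keeps both the total degree and the row q of
   each component. *)

Lemma sumr_pred1_uniq (I : eqType) (V : nmodType) (t : seq I) (F : I -> V) j :
  uniq t -> j \in t -> \sum_(i <- t | i == j) F i = F j.
Proof. by move=> t_uniq jt; rewrite -big_filter filter_pred1_uniq // big_seq1. Qed.

Lemma sumr_count_mem (I : eqType) (V : nmodType) (s t : seq I) (F : I -> V) :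
  uniq t -> {subset s <= t} ->
  \sum_(i <- s) F i = \sum_(i <- t) F i *+ count_mem i s.
Proof.
move=> t_uniq s_t; under [RHS]eq_bigr => i _ do
  rewrite -iter_addr_0 -big_const_seq.
rewrite (exchange_big_dep xpredT) //=; apply: eq_big_seq => j /s_t jt.
by rewrite -(sumr_pred1_uniq F t_uniq jt); apply: eq_bigl => i; rewrite eq_sym.
Qed.

Section Submodules.
Variables (R : pzRingType) (V : lmodType R).

Lemma submodP_and (S1 S2 : V -> Prop) :
  submodP S1 -> submodP S2 -> submodP (fun x => S1 x /\ S2 x).
Proof.
move=> [S1_0 [S1D S1Z]] [S2_0 [S2D S2Z]]; split; [by []|split].
- by move=> x y [? ?] [? ?]; split; [apply: S1D | apply: S2D].
- by move=> a x [? ?]; split; [apply: S1Z | apply: S2Z].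
Qed.

Lemma submodP_ker (W : lmodType R) (f : {linear V -> W}) :
  submodP (fun x => f x = 0).
Proof.
split; first exact: linear0.
split=> [x y fx fy | a x fx]; first by rewrite linearD fx fy addr0.
by rewrite linearZ /= fx scaler0.
Qed.

Lemma submodP_sum (S : V -> Prop) (I : Type) (s : seq I) (P : pred I)
    (F : I -> V) :
  submodP S -> (forall i, P i -> S (F i)) -> S (\sum_(i <- s | P i) F i).
Proof. by move=> [S0 [SD _]] SF; apply: big_ind. Qed.

Lemma submodP_muln (S : V -> Prop) x n : submodP S -> S x -> S (x *+ n).
Proof.
move=> [S0 [SD _]] Sx; elim: n => [|n IHn]; first by rewrite mulr0n.
by rewrite mulrS; apply: SD.
Qed.

Lemma submodP_Nset (d21 d01 : {linear V -> V}) : submodP (Nset d21 d01).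
Proof. exact: submodP_and (submodP_ker d01) (submodP_ker d21). Qed.

Lemma totd_Nset (d21 d10 d01 : {linear V -> V}) x :
  Nset d21 d01 x -> totd d21 d10 d01 x = d10 x.
Proof. by move=> [d01x d21x]; rewrite /totd d01x d21x add0r addr0. Qed.

End Submodules.

Section BigradedComplex.
Variables (R : pzRingType) (V : lmodType R).
Variables (C : int -> int -> V -> Prop) (d21 d10 d01 : {linear V -> V}).
Hypothesis HC : bigraded_complex C d21 d10 d01.

Local Notation N := (Nset d21 d01).
Local Notation d := (totd d21 d10 d01).

Let C_submod p q : submodP (C p q). Proof. by case: HC. Qed.

Let C_decomposition x : exists (s : seq (int * int)) (f : int * int -> V),
  (forall i, C i.1 i.2 (f i)) /\ x = \sum_(i <- s) f i.
Proof. by case: HC. Qed.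

Let C_direct (t : seq (int * int)) (f : int * int -> V) :
  uniq t -> (forall i, C i.1 i.2 (f i)) -> \sum_(i <- t) f i = 0 ->
  forall i, i \in t -> f i = 0.
Proof. by case: HC => _ _ _ Cdirect _; apply: Cdirect. Qed.

Let C_d21 p q x : C p q x -> C (p + 2) (q - 1) (d21 x).
Proof. by case: HC => _ _ _ _ [Cd21 _ _ _]; apply: Cd21. Qed.

Let C_d10 p q x : C p q x -> C (p + 1) q (d10 x).
Proof. by case: HC => _ _ _ _ [_ Cd10 _ _]; apply: Cd10. Qed.

Let C_d01 p q x : C p q x -> C (p + 0) (q + 1) (d01 x).
Proof. by rewrite addr0; case: HC => _ _ _ _ [_ _ Cd01 _]; apply: Cd01. Qed.

Let totdK x : d (d x) = 0.
Proof. by case: HC => _ _ _ _ [_ _ _ ->]. Qed.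

Lemma C0 p q : C p q 0.
Proof. by have [] := C_submod p q. Qed.

Lemma direct_sum3_eq0 (i j l : int * int) a b c :
  C i.1 i.2 a -> C j.1 j.2 b -> C l.1 l.2 c ->
  i != j -> i != l -> j != l -> a + b + c = 0 -> [/\ a = 0, b = 0 & c = 0].
Proof.
move=> Ca Cb Cc nij nil njl abc0.
pose f k := if k == i then a else if k == j then b else if k == l then c else 0.
have fi : f i = a by rewrite /f eqxx.
have fj : f j = b by rewrite /f eq_sym (negbTE nij) eqxx.
have fl : f l = c by rewrite /f eq_sym (negbTE nil) eq_sym (negbTE njl) eqxx.
have Cf k : C k.1 k.2 (f k).
  by rewrite /f; do 3!case: eqP => [->//|_]; apply: C0.
have ijl_uniq : uniq [:: i; j; l] by rewrite /= !inE negb_or nij nil njl.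
have f_sum : \sum_(k <- [:: i; j; l]) f k = 0.
  by rewrite !big_cons big_nil fi fj fl addr0 addrA.
have := C_direct ijl_uniq Cf f_sum; rewrite -fi -fj -fl.
by move=> f0; split; apply: f0; rewrite !inE eqxx ?orbT.
Qed.

Lemma bihomogeneous_components_eq0 (f : {linear V -> V}) (a b : int) :
    (forall p q x, C p q x -> C (p + a) (q + b) (f x)) ->
  forall (t : seq (int * int)) (g : int * int -> V),
  uniq t -> (forall i, C i.1 i.2 (g i)) -> \sum_(i <- t) f (g i) = 0 ->
  forall i, i \in t -> f (g i) = 0.
Proof.
move=> Cf t g t_uniq Cg sum0.
pose shift (i : int * int) := (i.1 + a, i.2 + b).
pose unshift (i : int * int) := (i.1 - a, i.2 - b).
have shiftK : cancel shift unshift by move=> [p q]; rewrite /unshift /= !addrK.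
have Cfg i : C i.1 i.2 (f (g (unshift i))).
  by have := Cf _ _ _ (Cg (unshift i)); rewrite /= !subrK.
have shift_sum0 : \sum_(i <- map shift t) f (g (unshift i)) = 0.
  by rewrite big_map -[RHS]sum0; apply: eq_bigr => i _; rewrite shiftK.
move=> i it; rewrite -[i]shiftK.
apply: (C_direct _ Cfg shift_sum0); last exact: map_f.
by rewrite (map_inj_uniq (can_inj shiftK)).
Qed.

Lemma uniq_decomposition x : exists (t : seq (int * int)) (g : int * int -> V),
  [/\ uniq t, forall i, C i.1 i.2 (g i) & x = \sum_(i <- t) g i].
Proof.
have [s [f [Cf ->]]] := C_decomposition x.
exists (undup s), (fun i => f i *+ count_mem i s); split.
- exact: undup_uniq.
- by move=> i; apply: submodP_muln.
- by apply: sumr_count_mem => [|i]; rewrite ?undup_uniq ?mem_undup.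
Qed.

Lemma Nset_decomposition x : N x ->
  exists (t : seq (int * int)) (g : int * int -> V),
  [/\ uniq t, forall i, N (g i) /\ C i.1 i.2 (g i) & x = \sum_(i <- t) g i].
Proof.
move=> [d01x d21x]; have [t [g [t_uniq Cg x_sum]]] := uniq_decomposition x.
exists t, (fun i => if i \in t then g i else 0); split=> //; last first.
  by rewrite x_sum; apply: eq_big_seq => i ->.
move=> i; case: ifP => it; last by split; [apply: (submodP_Nset _ _).1 | apply: C0].
have sum_eq0 (f : {linear V -> V}) : f x = 0 -> \sum_(j <- t) f (g j) = 0.
  by rewrite x_sum linear_sum.
split=> //; split.
- exact: bihomogeneous_components_eq0 C_d01 _ _ t_uniq Cg (sum_eq0 _ d01x) _ it.
- exact: bihomogeneous_components_eq0 C_d21 _ _ t_uniq Cg (sum_eq0 _ d21x) _ it.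
Qed.

Lemma Nset_d10_bihomogeneous p q x : N x -> C p q x -> N (d10 x).
Proof.
move=> Nx Cx; have Cy := C_d10 Cx.
have := totdK x; rewrite (totd_Nset d10 Nx) /totd => ddx0.
have [] := @direct_sum3_eq0 (p + 1 + 2, q - 1) (p + 1 + 1, q) (p + 1 + 0, q + 1)
  _ _ _ (C_d21 Cy) (C_d10 Cy) (C_d01 Cy) _ _ _ ddx0;
  try by apply/eqP; case; lia.
by move=> d21y _ d01y; split.
Qed.

Lemma submodP_Npq p q : submodP (Npq C d21 d01 p q).
Proof. exact: submodP_and (submodP_Nset _ _) (C_submod p q). Qed.

Lemma Npq_d10 p q x : Npq C d21 d01 p q x -> Npq C d21 d01 (p + 1) q (d10 x).
Proof. by move=> [Nx Cx]; split; [apply: Nset_d10_bihomogeneous Cx | apply: C_d10]. Qed.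

Lemma Nset_d10 x : N x -> N (d10 x).
Proof.
move=> /Nset_decomposition [t [g [_ NCg ->]]]; rewrite linear_sum.
by apply: submodP_sum (submodP_Nset _ _) _ => i _; have [] := NCg i;
  apply: Nset_d10_bihomogeneous.
Qed.

Lemma Ctot_submod k : submodP (Ctot C k).
Proof.
split; first by exists [::], (fun _ => 0); rewrite big_nil; split=> // p; apply: C0.
split=> [x y [s1 [f1 [Cf1 ->]]] [s2 [f2 [Cf2 ->]]] | a x [s [f [Cf ->]]]].
  pose t := undup (s1 ++ s2).
  have t_uniq : uniq t := undup_uniq _.
  exists t, (fun p => f1 p *+ count_mem p s1 + f2 p *+ count_mem p s2); split.
    by move=> p; have [_ [CD _]] := C_submod p (k - p); apply: CD;
      apply: submodP_muln.
  rewrite big_split /= -!(sumr_count_mem _ t_uniq) // => p ps;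
    by rewrite mem_undup mem_cat ps ?orbT.
exists s, (fun p => a *: f p); split; last by rewrite scaler_sumr.
by move=> p; have [_ [_ CZ]] := C_submod p (k - p); apply: CZ.
Qed.

Lemma C_Ctot p q x : C p q x -> Ctot C (p + q) x.
Proof.
move=> Cx; exists [:: p], (fun r => if r == p then x else 0).
rewrite big_seq1 eqxx; split=> // r.
by case: eqP => [->|_]; [rewrite [p + q]addrC addrK | apply: C0].
Qed.

Lemma Ctot_d10 k x : Ctot C k x -> Ctot C (k + 1) (d10 x).
Proof.
move=> [s [f [Cf ->]]]; rewrite linear_sum.
apply: submodP_sum (Ctot_submod _) _ => p _.
by have := C_Ctot (C_d10 (Cf p)); have -> : p + 1 + (k - p) = k + 1 by lia.
Qed.

Lemma Nset_graded x : N x -> exists (s : seq int) (f : int -> V),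
  (forall k, N (f k) /\ Ctot C k (f k)) /\ x = \sum_(k <- s) f k.
Proof.
move=> /Nset_decomposition [t [g [t_uniq NCg ->]]].
pose deg (i : int * int) := i.1 + i.2.
exists (undup (map deg t)), (fun k => \sum_(i <- t | deg i == k) g i); split.
  move=> k; split; first by apply: submodP_sum (submodP_Nset _ _) _ => i _;
    have [] := NCg i.
  by apply: submodP_sum (Ctot_submod _) _ => i /eqP <-; apply: C_Ctot;
    have [] := NCg i.
rewrite (exchange_big_dep xpredT) //=; apply: eq_big_seq => i it.
rewrite (eq_bigl (pred1 (deg i))) => [|k]; last exact: eq_sym.
by rewrite sumr_pred1_uniq ?undup_uniq ?mem_undup ?map_f.
Qed.

Lemma subcomplex_in_Nset (S : int -> V -> Prop) :
  (forall k, submodP (S k)) -> (forall k x, S k x -> N x /\ Ctot C k x) ->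
  (forall k x, S k x -> S (k + 1) (d10 x)) -> subcomplex C d21 d10 d01 S.
Proof.
move=> S_submod S_N S_d10; split=> //; split=> [k x /S_N [] // | k x Sx].
by rewrite totd_Nset; [apply: S_d10 | have [] := S_N _ _ Sx].
Qed.

End BigradedComplex.

Theorem lemma3p1 (R : pzRingType) (V : lmodType R)
  (C : int -> int -> V -> Prop) (d21 d10 d01 : {linear V -> V}) :
  bigraded_complex C d21 d10 d01 ->
  (* N is a graded submodule: N = (+)_k (N /\ C^k) ... *)
  [/\ submodP (Nset d21 d01),
      (forall x, Nset d21 d01 x -> exists (s : seq int) (f : int -> V),
         (forall k, Nset d21 d01 (f k) /\ Ctot C k (f k)) /\ x = \sum_(k <- s) f k),
      (* ... and a cochain subcomplex of (C, d) *)
      subcomplex C d21 d10 d01 (fun k x => Nset d21 d01 x /\ Ctot C k x) &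
      (* for each q, N_q = (+)_p N^{p-q,q} (degree p) is a cochain subcomplex *)
      forall q : int, subcomplex C d21 d10 d01 (fun p => Npq C d21 d01 (p - q) q)].
Proof.
move=> HC; split.
- exact: submodP_Nset.
- exact: (Nset_graded HC).
- apply: subcomplex_in_Nset => // [k | k x [Nx Cx]].
    exact: submodP_and (submodP_Nset _ _) (Ctot_submod HC k).
  by split; [exact: (Nset_d10 HC Nx) | exact: (Ctot_d10 HC Cx)].
- move=> q; apply: subcomplex_in_Nset => [p | p x [Nx Cx] | p x].
  + exact: (submodP_Npq HC).
  + by split=> //; have := C_Ctot HC Cx; rewrite subrK.
  + by rewrite addrAC; apply: (Npq_d10 HC).
Qed.
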